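(* If $\omega_r\in\mathrm{Eval}(G/\Omega_j)$ with multiplicity $m$, then $\omega_{r+\aleph p}\in\mathrm{Eval}(G/\Omega_j)$ with multiplicity $m$, for all $p=1,\dots,k/\aleph$.
   Context: Non-singular monad matrices are $(A,B,C,D)$ with $A\in GL(k,\mathbb{C})$, $B\in Mat_{k\times k}(\mathbb{C})$, $C\in Mat_{k\times 2}(\mathbb{C})$, $D\in Mat_{2\times k}(\mathbb{C})$, satisfying $[A,B]+CD=0$ and the full-rank conditions. Fix $j\in\mathbb{Z}_{2k}$ even; $(A,B,C,D)$ is such that there is $G\in GL(k,\mathbb{C})$ with $e^{\imath\frac{2j\pi}{k}}A=GAG^{-1}$, $e^{\imath\frac{2\pi}{k}}B=GBG^{-1}$, $e^{\imath\frac{\pi}{k}}C=GC\,\mathrm{adj}(\sigma_{2j\pi/k})$, $e^{\imath\frac{\pi}{k}}D=\sigma_{2j\pi/k}DG^{-1}$ ($\sigma_\varphi=\mathrm{diag}(e^{-\imath\frac{3\varphi}{4}},e^{-\imath\frac{\varphi}{4}})$, $\mathrm{adj}(\sigma)=\det(\sigma)\sigma^{-1}$), in a basis where $G=\Omega_j\,\mathrm{diag}\{x_1,\dots,x_k\}$ with $x_r$ $k$-th roots of unity. Notation: $\aleph=\gcd(j,k)$, $\Omega_j=e^{\imath\frac{(2-j)\pi}{2k}}$, $\omega_r=e^{\imath\frac{2\pi r}{k}}$ (indices mod $k$). *)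

From HB Require Import structures.
From mathcomp Require Import all_boot all_algebra.
From mathcomp Require Import reals trigo.
From mathcomp Require Export complex.
Set Implicit Arguments. Unset Strict Implicit. Unset Printing Implicit Defensive.
Import GRing.Theory Num.Theory.
Local Open Scope ring_scope.
Local Open Scope complex_scope.

Definition expi {R : realType} (t : R) : R[i] := (cos t +i* sin t).

Definition Omega {R : realType} (k j : nat) : R[i] :=
  expi (((2%:Z - j%:Z)%:~R : R) * pi / (2 * k%:R)).

Definition omega {R : realType} (k r : nat) : R[i] :=
  expi (2 * pi * r%:R / k%:R : R).

Definition sigma {R : realType} (phi : R) : 'M[R[i]]_2 :=
  diag_mx (\row_(a < 2) if (a : nat) == 0%N then expi (- (3 * phi / 4))
                        else expi (- (phi / 4))).

Definition nonsingular_monad {R : realType} (k : nat) (A B : 'M[R[i]]_k)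
    (C : 'M[R[i]]_(k, 2)) (D : 'M[R[i]]_(2, k)) : Prop :=
  [/\ A \in unitmx,
      A *m B - B *m A + C *m D = 0,
      (forall x y : R[i],
         \rank (col_mx (col_mx (x%:M - A) (y%:M - B)) D) = k) &
      (forall x y : R[i],
         \rank (row_mx (row_mx (x%:M - A) (y%:M - B)) C) = k)].

(* Conjugating A by G = Omega_j diag(x) multiplies A by omega_j, so every
   nonzero entry A_ab forces x_a = omega_j x_b.  As A is invertible, some
   permutation s has A_{a, s a} != 0 for all a; hence multiplication by
   omega_j permutes the multiset of diagonal entries of diag(x), the
   eigenvalues of G / Omega_j.  Finally, by Bezout, the powers of omega_j
   are exactly the omega_{gcd(j,k) p}. *)

From HB Require Import structures.
From mathcomp Require Import all_boot all_algebra.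
From mathcomp Require Import reals trigo.
From mathcomp Require Import complex.
From mathcomp Require Import perm ring zify.
Set Implicit Arguments. Unset Strict Implicit. Unset Printing Implicit Defensive.
Import GRing.Theory Num.Theory.
Local Open Scope ring_scope.
Local Open Scope complex_scope.

Section Expi.
Variable R : realType.

Lemma expiD (a b : R) : expi (a + b) = expi a * expi b.
Proof. by rewrite /expi cosD sinD /=; congr (_ +i* _); ring. Qed.

Lemma expi0 : expi (0 : R) = 1.
Proof. by rewrite /expi cos0 sin0. Qed.

Lemma expi_neq0 (a : R) : expi a != 0.
Proof.
apply/eqP => ea0; have := expiD a (- a).
by rewrite subrr expi0 ea0 mul0r => /eqP; rewrite oner_eq0.
Qed.

Lemma expiMn (a : R) n : expi a ^+ n = expi (a *+ n).
Proof.
elim: n => [|n IHn]; first by rewrite expr0 mulr0n expi0.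
by rewrite exprS IHn mulrS expiD.
Qed.

Lemma expi2pi : expi (pi *+ 2 : R) = 1.
Proof. by rewrite /expi cos2pi sin2pi. Qed.

Lemma omegaD (k a b : nat) : omega k a * omega k b = omega k (a + b) :> R[i].
Proof. by rewrite /omega -expiD natrD; congr expi; ring. Qed.

Lemma omegaX (k a t : nat) : omega k a ^+ t = omega k (a * t) :> R[i].
Proof. by rewrite /omega expiMn natrM -mulr_natr; congr expi; ring. Qed.

Lemma omega_period (k : nat) : (0 < k)%N -> omega k k = 1 :> R[i].
Proof.
move=> k_gt0; rewrite /omega -expi2pi; congr expi.
have k_neq0 : (k%:R : R) != 0 by rewrite pnatr_eq0 -lt0n.
by rewrite mulr2n; field.
Qed.

Lemma omega_modn (k a b : nat) :
  (0 < k)%N -> a = b %[mod k] -> omega k a = omega k b :> R[i].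
Proof.
move=> k_gt0 eq_ab.
have omega_mod (n : nat) : omega k n = omega k (n %% k) :> R[i].
  rewrite {1}(divn_eq n k) addnC -omegaD mulnC -omegaX omega_period //.
  by rewrite expr1n mulr1.
by rewrite omega_mod eq_ab -omega_mod.
Qed.

End Expi.

Lemma gcdn_mul_modn (j k p : nat) :
  (0 < k)%N -> exists t, (j * t = gcdn j k * p %[mod k])%N.
Proof.
case: k => // k _; have [a _ /dvdnP [c Hc]] := Bezoutr j (ltn0Sn k).
exists (a * k * p); apply/eqP; rewrite -(eqn_modDr (a * j * p)).
have -> : (j * (a * k * p) + a * j * p = (a * j * p) * k.+1)%N by lia.
have -> : (gcdn j k.+1 * p + a * j * p = c * p * k.+1)%N.
  by rewrite -mulnDl Hc; lia.
by rewrite !modnMl.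
Qed.

Lemma unitmx_perm_support (R : comUnitRingType) n (A : 'M[R]_n) :
  A \in unitmx -> exists s : 'S_n, forall i, A i (s i) != 0.
Proof.
rewrite unitmxE => det_unit.
have [s prod_neq0] : exists s : 'S_n, \prod_i A i (s i) != 0.
  apply/existsP; apply: contraLR det_unit; rewrite negb_exists => /forallP nz.
  rewrite (_ : \det A = 0) ?unitr0 //; apply: big1 => s _.
  by rewrite (eqP (negbNE (nz s))) mulr0.
exists s => i; apply: contra prod_neq0 => /eqP Ai0.
by rewrite (bigD1 i) //= Ai0 mul0r.
Qed.

Lemma diag_conj_support (R : idomainType) n (y : 'rV[R]_n) (A : 'M_n) z :
  (z *: A) *m diag_mx y = diag_mx y *m A ->
  forall a b, A a b != 0 -> y 0 a = z * y 0 b.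
Proof.
move=> conjA a b Aab_neq0; have := congr1 (fun M : 'M_n => M a b) conjA.
rewrite mul_mx_diag mul_diag_mx !mxE => eq_ab.
by apply: (mulIf Aab_neq0); rewrite -eq_ab mulrAC.
Qed.

Section DiagonalMultiplicities.
Variables (F : fieldType) (n : nat) (x : 'rV[F]_n).

Lemma mup_char_poly_diag l :
  mup l (char_poly (diag_mx x)) = (\sum_(a < n) (x 0%R a == l))%N.
Proof.
rewrite char_poly_trig ?diag_mx_is_trig //.
pose P (p : {poly F}) c := p != 0 /\ mup l p = c.
suff [] : P (\prod_a ('X - (diag_mx x a a)%:P)) (\sum_a (x 0%R a == l))%N by [].
apply: (big_rec2 P) => [|a c p _ [p_neq0 <-]].
  by split; rewrite ?oner_eq0 // mupNroot // /root hornerC oner_eq0.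
split; first by rewrite mulf_neq0 ?polyXsubC_eq0.
by rewrite mupM ?polyXsubC_eq0 // -(expr1 ('X - _)) mup_XsubCX mxE eqxx mulr1n.
Qed.

Lemma mup_char_poly_diag_mulX (A : 'M[F]_n) z :
  A \in unitmx -> z != 0 -> (forall a b, A a b != 0 -> x 0 a = z * x 0 b) ->
  forall t l, mup (z ^+ t * l) (char_poly (diag_mx x)) =
              mup l (char_poly (diag_mx x)).
Proof.
move=> A_unit z_neq0 suppA; have [s As] := unitmx_perm_support A_unit.
have mup_mul l : mup (z * l) (char_poly (diag_mx x)) =
                 mup l (char_poly (diag_mx x)).
  rewrite !mup_char_poly_diag [in RHS](reindex_inj (@perm_inj _ s)) /=.
  by apply: eq_bigr => a _; rewrite (suppA _ _ (As a)) (inj_eq (mulfI z_neq0)).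
elim=> [|t IHt] l; first by rewrite expr0 mul1r.
by rewrite exprSr -mulrA IHt mup_mul.
Qed.

End DiagonalMultiplicities.

Lemma eigenvalue_mup_gt0 (F : fieldType) n (M : 'M[F]_n) l :
  eigenvalue M l = (0 < mup l (char_poly M))%N.
Proof.
rewrite eigenvalue_root_char -dvdp_XsubCl XsubC_dvd //.
exact/monic_neq0/char_poly_monic.
Qed.

Theorem mainTheorem9 (R : realType) (k j : nat)
  (A B : 'M[R[i]]_k) (C : 'M[R[i]]_(k, 2)) (D : 'M[R[i]]_(2, k))
  (G : 'M[R[i]]_k) (x : 'rV[R[i]]_k) (r m : nat) :
  (0 < k)%N -> (j < 2 * k)%N -> ~~ odd j ->
  nonsingular_monad A B C D ->
  G \in unitmx ->
  expi (2 * j%:R * pi / k%:R) *: A = G *m A *m invmx G ->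
  expi (2 * pi / k%:R) *: B = G *m B *m invmx G ->
  expi (pi / k%:R) *: C = G *m C *m \adj (sigma (2 * j%:R * pi / k%:R)) ->
  expi (pi / k%:R) *: D = sigma (2 * j%:R * pi / k%:R) *m D *m invmx G ->
  (forall a : 'I_k, x 0 a ^+ k = 1) ->
  G = Omega k j *: diag_mx x ->
  eigenvalue ((Omega k j)^-1 *: G) (omega k r) ->
  mup (omega k r) (char_poly ((Omega k j)^-1 *: G)) = m ->
  forall p : nat, (1 <= p <= k %/ gcdn j k)%N ->
    eigenvalue ((Omega k j)^-1 *: G) (omega k (r + gcdn j k * p)) /\
    mup (omega k (r + gcdn j k * p)) (char_poly ((Omega k j)^-1 *: G)) = m.
Proof.
move=> k_gt0 _ _ [A_unit _ _ _] G_unit conjA _ _ _ _ defG eig_r mup_r p _.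
have Omega_neq0 : Omega k j != 0 :> R[i] by exact: expi_neq0.
have diagG : (Omega k j)^-1 *: G = diag_mx x.
  by rewrite defG scalerA mulVf // scale1r.
rewrite diagG in eig_r mup_r *.
set z := expi (2 * j%:R * pi / k%:R : R) in conjA.
have conjA_diag : (z *: A) *m diag_mx x = diag_mx x *m A.
  apply: (scalerI Omega_neq0).
  by rewrite [LHS]scalemxAr [RHS]scalemxAl -defG conjA mulmxKV.
have z_omega : z = omega k j by rewrite /z /omega; congr expi; ring.
have [t mod_t] := gcdn_mul_modn j p k_gt0.
have shift : omega k (r + gcdn j k * p) = z ^+ t * omega k r.
  rewrite z_omega omegaX omegaD; apply: omega_modn => //.
  by rewrite addnC; apply/eqP; rewrite eqn_modDr mod_t.
have mup_shift : mup (omega k (r + gcdn j k * p)) (char_poly (diag_mx x)) = m.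
  rewrite shift (mup_char_poly_diag_mulX A_unit (expi_neq0 _)) //.
  exact: diag_conj_support conjA_diag.
split; last exact: mup_shift.
by rewrite eigenvalue_mup_gt0 mup_shift -mup_r -eigenvalue_mup_gt0.
Qed.
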